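(* For every topological space $X$ the following are equivalent: (1) $\pi_0^{\mathrm{ps}}X$ is topological (its pseudotopology is the ultrafilter convergence of some topology); (2) $\pi_0^{\mathrm{ps}}X=\pi_0^{\mathrm{top}}X$ (the quotient pseudotopology on the set of path components equals the ultrafilter convergence of the quotient topology); (3) the natural projection $q_X\colon X\to\pi_0^{\mathrm{top}}X$ is biquotient.
   Context: For a set $X$, $U(X)$ is the set of ultrafilters on $X$, $\dot x$ the principal ultrafilter at $x$; for $f\colon X\to Y$, $f_*\mathscr F=\{S\subset Y:f^{-1}(S)\in\mathscr F\}$. A pseudotopological structure on $X$ is a relation $u\subset U(X)\times X$ containing all $(\dot x,x)$; write $\mathscr U\to x$. A topological space is regarded as a pseudotopological space via ultrafilter convergence. For a topological space $X$, $\pi_0^{\mathrm{ps}}X$ is the set of path components of $X$ with the final pseudotopology w.r.t. the projection $q_X$ (which assigns to each point its path component): $\mathscr U\to c$ iff $\mathscr U=\dot c$ or $\mathscr U=(q_X)_*\mathscr V$ and $c=q_X(x)$ for some ultrafilter $\mathscr V$ on $X$ converging to $x$. $\pi_0^{\mathrm{top}}X$ is the same set with the quotient topology w.r.t. $q_X$. A continuous surjection $f\colon X\to Y$ of topological spaces is biquotient if for every $y\in Y$ and every cover $\mathcal O$ of $f^{-1}(y)$ by open subsets of $X$, finitely many sets $f(O)$, $O\in\mathcal O$, cover some neighbourhood of $y$ in $Y$. *)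

From HB Require Import structures.
From mathcomp Require Import all_boot all_order all_algebra.
From mathcomp Require Import all_classical all_reals topology.
From mathcomp Require Import Rstruct Rstruct_topology.
From Stdlib Require Import Reals.
Set Implicit Arguments.
Unset Strict Implicit.
Unset Printing Implicit Defensive.
Local Open Scope classical_set_scope.

Definition path_component (X : topologicalType) (x : X) : set X :=
  [set y | exists f : R -> X,
     {within `[0%R, 1%R], continuous f} /\ f 0%R = x /\ f 1%R = y].

Definition pi0 (X : topologicalType) : Type :=
  {A : set X | exists x : X, A = path_component x}.

Definition qX (X : topologicalType) (x : X) : pi0 X :=
  exist (fun A : set X => exists x0 : X, A = path_component x0)
        (path_component x) (ex_intro _ x erefl).

Definition is_topology (Y : Type) (tau : set (set Y)) : Prop :=
  tau setT /\
  (forall A B, tau A -> tau B -> tau (A `&` B)) /\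
  (forall S : set (set Y), S `<=` tau -> tau (\bigcup_(A in S) A)).

Definition top_conv (Y : Type) (tau : set (set Y)) (U : set_system Y) (y : Y)
  : Prop := forall O, tau O -> O y -> U O.

Definition pi0_top_opens (X : topologicalType) : set (set (pi0 X)) :=
  [set O | open (qX (X:=X) @^-1` O)].

Definition pi0_ps_conv (X : topologicalType) (U : set_system (pi0 X)) (c : pi0 X)
  : Prop :=
  U = principal_filter c \/
  exists (V : set_system X) (x : X),
    UltraFilter V /\ V --> x /\ U = fmap (qX (X:=X)) V /\ c = qX x.

Definition pseudotop_is_topological (Y : Type)
  (conv : set_system Y -> Y -> Prop) : Prop :=
  exists tau : set (set Y), is_topology tau /\
    forall (U : set_system Y) (y : Y), UltraFilter U ->
      (conv U y <-> top_conv tau U y).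

Definition biquotient (X : topologicalType) (Y : Type) (tauY : set (set Y))
  (f : X -> Y) : Prop :=
  (forall W, tauY W -> open (f @^-1` W)) /\
  (forall y : Y, exists x : X, f x = y) /\
  (forall (y : Y) (C : set (set X)),
     (forall O, C O -> open O) ->
     f @^-1` [set y] `<=` \bigcup_(O in C) O ->
     exists F : set (set X), finite_set F /\ F `<=` C /\
       exists N : set Y, (exists W, tauY W /\ W y /\ W `<=` N) /\
         N `<=` \bigcup_(O in F) (f @` O)).

From HB Require Import structures.
From mathcomp Require Import all_boot all_order all_algebra.
From mathcomp Require Import all_classical all_reals topology.
Local Open Scope classical_set_scope.

(** Nothing specific to path components is used: the argument works for any
    surjection q from a topological space X onto a set Y.  Final convergence
    always implies convergence in the quotient topology, q being continuous.

    (1) => (2): if a topology tau induces the final pseudotopology, a point x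
    in the closure of the complement of q^-1 W, W tau-open, is the limit of an
    ultrafilter V containing that complement; q_* V -> q x in tau then forces
    q x to lie outside W, so q^-1 W is open.  Thus tau is coarser than the
    quotient topology, and quotient convergence implies tau-convergence, i.e.
    final convergence.

    (2) <=> (3): if no finitely many images q O, O in a cover C of the fibre
    over y, cover a neighbourhood of y, the sets W \ (q O_1 \cup ... \cup q O_n)
    generate an ultrafilter converging to y in the quotient topology but not
    finally.  Conversely, if U -> y in the quotient topology, biquotientness
    yields a point x of the fibre adherent to q^-1 U, and an ultrafilter V -> x
    refining q^-1 U has q_* V = U. *)

Lemma ultra_fmap {T T' : Type} (f : T -> T') {V : set_system T} :
  UltraFilter V -> UltraFilter (fmap f V).
Proof.
move=> UV; split=> [|G PG fVG]; first exact: fmap_proper_filter.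
rewrite predeqE => A; split=> [GA|]; last exact: fVG.
have [//|VnA] := in_ultra_setVsetC (f @^-1` A) UV.
have GnA : G (~` A) by apply: fVG.
by have [? []] := filter_ex (filterI GA GnA).
Qed.

Lemma filter_bigI_finite {T I : Type} (D : set I) (g : I -> set T)
    (F : set_system T) :
  Filter F -> finite_set D -> (forall i, D i -> F (g i)) ->
  F (\bigcap_(i in D) g i).
Proof.
move=> FF /(@finite_fsetP {classic I}) [S ->] Fg.
exact: (@filter_bigI T {classic I}).
Qed.

Lemma cluster_ultra {T : topologicalType} {F : set_system T} {x : T} :
  Filter F -> cluster F x -> exists2 V, UltraFilter V & V --> x /\ F `<=` V.
Proof.
move=> FF; rewrite cluster_cvgE => -[G PG [Gx FG]].
have [V [UV GV]] := ultraFilterLemma PG.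
by exists V => //; split; apply: subset_trans GV.
Qed.

Lemma closure_ultra {T : topologicalType} (A : set T) (x : T) :
  closure A x -> exists2 V, UltraFilter V & V --> x /\ V A.
Proof.
rewrite closureEcluster => /cluster_ultra[V UV [Vx AV]].
by exists V => //; split => //; apply: AV.
Qed.

Lemma filter_from_preimage {T T' : Type} (f : T -> T') (U : set_system T') :
  Filter U -> Filter (filter_from U (preimage f)).
Proof.
move=> FU; apply: filter_from_filter; first by exists setT; exact: filterT.
by move=> A B UA UB; exists (A `&` B); [exact: filterI|rewrite preimage_setI].
Qed.

Lemma surjective_qX (X : topologicalType) (c : pi0 X) : exists x, qX x = c.
Proof.
case: c => A [x eA]; exists x; subst A.
by congr exist; exact: Prop_irrelevance.
Qed.

Section FinalPseudotopology.
Context {X : topologicalType} {Y : Type} (q : X -> Y).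

Definition quotient_opens : set (set Y) := [set W | open (q @^-1` W)].

Definition final_conv (U : set_system Y) (y : Y) : Prop :=
  U = principal_filter y \/
  exists (V : set_system X) (x : X),
    UltraFilter V /\ V --> x /\ U = fmap q V /\ y = q x.

Definition final_conv_is_quotient : Prop :=
  forall (U : set_system Y) (y : Y), UltraFilter U ->
    (final_conv U y <-> top_conv quotient_opens U y).

Definition biquotient_at (tau : set (set Y)) (y : Y) : Prop :=
  forall C : set (set X), (forall O, C O -> open O) ->
    q @^-1` [set y] `<=` \bigcup_(O in C) O ->
    exists F : set (set X), finite_set F /\ F `<=` C /\
      exists N : set Y, (exists W, tau W /\ W y /\ W `<=` N) /\
        N `<=` \bigcup_(O in F) (q @` O).

Lemma quotient_opens_topology : is_topology quotient_opens.
Proof.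
rewrite /is_topology /quotient_opens /=.
split; first by rewrite preimage_setT; exact: openT.
split=> [A B oA oB|S Sq]; first by rewrite preimage_setI; exact: openI.
by rewrite preimage_bigcup; apply: bigcup_open => A /Sq.
Qed.

Lemma final_conv_top_conv (U : set_system Y) (y : Y) :
  final_conv U y -> top_conv quotient_opens U y.
Proof.
case=> [->|[V [x [_ [Vx [-> ->]]]]]] W oW Wy; first by move=> z ->.
by apply: Vx; apply: open_nbhs_nbhs.
Qed.

Lemma final_topology_sub_quotient {tau : set (set Y)} :
  (forall U y, UltraFilter U -> final_conv U y <-> top_conv tau U y) ->
  tau `<=` quotient_opens.
Proof.
move=> final_tau W tauW; rewrite /quotient_opens /= -closedC.
move=> x /closure_ultra[V UV [Vx VnW]] Wqx.
have qV_qx : final_conv (fmap q V) (q x) by right; exists V, x.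
have VW : V (q @^-1` W) := (final_tau _ _ (ultra_fmap q UV)).1 qV_qx W tauW Wqx.
by have [? []] := filter_ex (filterI VW VnW).
Qed.

Lemma final_conv_topologicalP :
  pseudotop_is_topological final_conv <-> final_conv_is_quotient.
Proof.
split=> [[tau [_ final_tau]] U y UU|final_quot]; last first.
  by exists quotient_opens; split; [exact: quotient_opens_topology|].
split=> [|Uy]; first exact: final_conv_top_conv.
apply/final_tau => // W /(final_topology_sub_quotient final_tau); exact: Uy.
Qed.

Lemma ultra_avoiding_images (tau : set (set Y)) (y : Y) (C : set (set X)) :
  is_topology tau ->
  (forall F, finite_set F -> F `<=` C -> forall W, tau W -> W y ->
     ~ W `<=` \bigcup_(O in F) (q @` O)) ->
  exists U, [/\ UltraFilter U, top_conv tau U y &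
                forall O, C O -> U (~` (q @` O))].
Proof.
move=> [tauT [tauI _]] noF.
pose D := [set WF : set Y * set (set X) |
  [/\ tau WF.1, WF.1 y, finite_set WF.2 & WF.2 `<=` C]].
pose B (WF : set Y * set (set X)) := WF.1 `&` ~` \bigcup_(O in WF.2) q @` O.
have DB : ProperFilter (filter_from D B).
  apply: filter_from_proper; last first.
    move=> [W F] [/= tW Wy fF FC]; apply: contrapT => B0.
    apply: (noF F fF FC W tW Wy) => z Wz; apply: contrapT => nz.
    by apply: B0; exists z.
  apply: filter_from_filter.
    by exists (setT, set0); split=> //; exact: finite_set0.
  move=> [W1 F1] [W2 F2] [/= t1 c1 f1 s1] [/= t2 c2 f2 s2].
  exists (W1 `&` W2, F1 `|` F2).
    split=> /=; [exact: tauI|by split|by rewrite finite_setU|].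
    by move=> O [/s1|/s2].
  by rewrite /B /= bigcup_setU setCU setIACA.
have [U [UU DBU]] := ultraFilterLemma DB.
exists U; split=> // [W tW Wy|O CO].
  apply: DBU; exists (W, set0); last by move=> z [].
  by split=> //; exact: finite_set0.
apply: DBU; exists (setT, [set O]).
  by split=> //; [exact: finite_set1|move=> O' ->].
by move=> z [_ nz] qOz; apply: nz; exists O.
Qed.

Lemma biquotient_at_of_final_conv (tau : set (set Y)) (y : Y) :
  is_topology tau -> (exists x, q x = y) ->
  (forall U, UltraFilter U -> top_conv tau U y -> final_conv U y) ->
  biquotient_at tau y.
Proof.
move=> tau_top [x0 qx0] final_tau C Copen Ccov; apply: contrapT => noF.
have [|U [UU Uy UnqC]] := @ultra_avoiding_images tau y C tau_top.
  move=> F fF FC W tW Wy WF; apply: noF; exists F; do 2!split=> //.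
  exists W; split=> //.
  by exists W; do 2!split=> //.
case: (final_tau U UU Uy) => [Uy_pr|[V [x [UV [Vx [UqV yqx]]]]]].
  have [O CO Ox0] := Ccov x0 qx0.
  by have := UnqC O CO; rewrite Uy_pr => /(_ y erefl); apply; exists x0.
have [O CO Ox] := Ccov x (esym yqx).
have VO : V O by apply: Vx; apply: open_nbhs_nbhs; split=> //; exact: Copen.
have VnqO : V (q @^-1` ~` (q @` O)) by have := UnqC O CO; rewrite UqV.
have [z [Oz nqz]] := filter_ex (filterI VO VnqO).
by apply: nqz; exists z.
Qed.

Lemma biquotient_at_cluster (tau : set (set Y)) (y : Y) (U : set_system Y) :
  ProperFilter U -> biquotient_at tau y -> top_conv tau U y ->
  exists2 x, q x = y & cluster (filter_from U (preimage q)) x.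
Proof.
move=> FU biq Uy; apply: contrapT => nocl.
pose C := [set O : set X | open O /\ U (~` (q @` O))].
have Ccov : q @^-1` [set y] `<=` \bigcup_(O in C) O.
  move=> x qxy; apply: contrapT => nx; apply: nocl.
  exists x => // P N [A UA AP].
  rewrite nbhsE => -[O [oO Ox] ON]; apply: contrapT => PN0.
  apply: nx; exists O => //; split=> //.
  apply: filterS UA => a Aa [z Oz qza]; apply: PN0; exists z; split.
    by apply: AP; rewrite /preimage /= qza.
  exact: ON.
have [F [fF [FC [N [[W [tW [Wy WN]]] NF]]]]] := biq C (fun O CO => CO.1) Ccov.
have UnF : U (\bigcap_(O in F) ~` (q @` O)).
  by apply: filter_bigI_finite => // O /FC[].
have [z [Wz nFz]] := filter_ex (filterI (Uy W tW Wy) UnF).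
by have [O FO Oz] := NF z (WN z Wz); exact: nFz O FO Oz.
Qed.

Lemma biquotient_at_final_conv (tau : set (set Y)) (y : Y) (U : set_system Y) :
  UltraFilter U -> biquotient_at tau y -> top_conv tau U y -> final_conv U y.
Proof.
move=> UU biq Uy; have [x qxy clx] := @biquotient_at_cluster tau y U _ biq Uy.
have [V UV [Vx UqV]] := cluster_ultra (filter_from_preimage q U _) clx.
right; exists V, x; do !split=> //.
by apply/esym/max_filter => A UA; apply: UqV; exists A.
Qed.

Lemma final_conv_is_quotientP : (forall y, exists x, q x = y) ->
  final_conv_is_quotient <-> biquotient quotient_opens q.
Proof.
move=> qsurj; split=> [final_quot|[_ [_ biq]] U y UU].
  split; first by []; split=> // y.
  apply: biquotient_at_of_final_conv => //.
    exact: quotient_opens_topology.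
  by move=> U UU /(final_quot U y UU).
split; first exact: final_conv_top_conv.
exact: biquotient_at_final_conv UU (biq y).
Qed.

End FinalPseudotopology.

Theorem proposition4p4 (X : topologicalType) :
  (pseudotop_is_topological (@pi0_ps_conv X) <->
   (forall (U : set_system (pi0 X)) (c : pi0 X), UltraFilter U ->
      (pi0_ps_conv U c <-> top_conv (@pi0_top_opens X) U c))) /\
  ((forall (U : set_system (pi0 X)) (c : pi0 X), UltraFilter U ->
      (pi0_ps_conv U c <-> top_conv (@pi0_top_opens X) U c)) <->
   biquotient (@pi0_top_opens X) (qX (X:=X))).
Proof.
split; first exact (final_conv_topologicalP (@qX X)).
exact (final_conv_is_quotientP _ (@surjective_qX X)).
Qed.
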